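(* Let $\lambda\in X^+$ be a $p$-core. Let $\alpha=\varepsilon_i-\varepsilon_j$ with $1\le i<j\le m$, and suppose $\langle\lambda+\rho,\alpha^\vee\rangle=a+lp$ with integers $a,l>0$. Then $\chi(s_{\alpha,l}\cdot\lambda)=0$.
   Context: Setup: $p>2$ is a prime, $m\ge1$, weight lattice $X=\mathbb Z^m$ of $\mathrm{Sp}_{2m}$ with standard basis $\varepsilon_i$, standard inner product, $\alpha^\vee=2\alpha/\langle\alpha,\alpha\rangle$. $X^+=\{\lambda\in\mathbb Z^m:\lambda_1\ge\dots\ge\lambda_m\ge0\}$. $\rho=(m,m-1,\dots,1)$. $s_{\alpha,l}(x)=x-(\langle x,\alpha^\vee\rangle-lp)\alpha$, $w\cdot x=w(x+\rho)-\rho$. For $\mu\in X$, $\chi(\mu)$ is the Weyl character of type $C_m$; $\chi(\mu)=0$ iff some entry of $\mu+\rho$ is $0$ or two entries of $\mu+\rho$ are equal up to sign. A $p$-core is $\lambda\in X^+$ such that for all $i$ and all integers $l\ge1$ with $(\lambda+\rho)_i-lp>0$, the number $(\lambda+\rho)_i-lp$ occurs as an entry of $\lambda+\rho$. *)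

From mathcomp Require Import all_boot all_order all_algebra all_fingroup.
Set Implicit Arguments. Unset Strict Implicit. Unset Printing Implicit Defensive.
Import Order.TTheory GRing.Theory Num.Theory.
Local Open Scope ring_scope.

(* Weights of Sp_{2m}: X = Z^m, coordinates indexed by 'I_m
   (coordinate k : 'I_m is the paper's coordinate k+1). *)
Definition weight (m : nat) := {ffun 'I_m -> int}.

Definition eps (m : nat) (i : 'I_m) : weight m := [ffun k => (k == i)%:Z].

Definition wadd m (x y : weight m) : weight m := [ffun k => x k + y k].
Definition wsub m (x y : weight m) : weight m := [ffun k => x k - y k].
Definition wscale m (c : int) (x : weight m) : weight m := [ffun k => c * x k].

Definition inner m (x y : weight m) : int := \sum_(k < m) x k * y k.

Definition pair_coroot m (x alpha : weight m) : int :=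
  ((2 * inner x alpha) %/ inner alpha alpha)%Z.

Definition rho (m : nat) : weight m := [ffun k : 'I_m => (m - k)%N%:Z].

Definition dominant m (lam : weight m) : Prop :=
  (forall i j : 'I_m, (i <= j)%N -> lam j <= lam i) /\ (forall k, 0 <= lam k).

Definition s_aff m (p : nat) (alpha : weight m) (l : int) (x : weight m) : weight m :=
  wsub x (wscale (pair_coroot x alpha - l * p%:Z) alpha).

Definition dot m (w : weight m -> weight m) (x : weight m) : weight m :=
  wsub (w (wadd x (rho m))) (rho m).

Definition p_core m (p : nat) (lam : weight m) : Prop :=
  dominant lam /\
  forall (i : 'I_m) (l : int), 1 <= l ->
    0 < (wadd lam (rho m)) i - l * p%:Z ->
    exists k : 'I_m, (wadd lam (rho m)) k = (wadd lam (rho m)) i - l * p%:Z.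

(* The Weyl group W = {±1}^m ⋊ S_m acts by
   signed permutations, with sign det(w) = sgn(s) * prod_k e_k.  By the Weyl
   character formula chi(mu) = A(mu+rho)/A(rho) in the group ring Z[X]
   (an integral domain, A(rho) <> 0), where
   A(x) = sum_{w in W} det(w) e^{w x}.  We encode A(x) by its coefficient
   function on X. *)
Definition signed_perm m (s : 'S_m) (e : {ffun 'I_m -> bool}) (x : weight m)
  : weight m := [ffun k => (-1) ^+ e k * x (s k)].

Definition weyl_numerator m (x : weight m) (y : weight m) : int :=
  \sum_(s : 'S_m) \sum_(e : {ffun 'I_m -> bool})
     (if y == signed_perm s e x
      then (-1) ^+ (odd_perm s + #|[set k | e k]|)%N else 0).

Definition weyl_char_zero m (mu : weight m) : Prop :=
  forall y : weight m, weyl_numerator (wadd mu (rho m)) y = 0.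

From mathcomp Require Import all_boot all_order all_algebra all_fingroup.
From mathcomp Require Import zify.
Import Order.TTheory GRing.Theory Num.Theory.
Local Open Scope ring_scope.

(* Put x = lam + rho and alpha = eps_i - eps_j.  Since
   <alpha, alpha> = 2, the coroot pairing is <x, alpha^vee> = x_i - x_j, so
   the hypothesis reads x_i - x_j = a + l p, and
     y := s_{alpha,l}.lam + rho = s_{alpha,l}(x) = x - a alpha,
   i.e. y_i = x_i - a = x_j + l p, y_j = x_j + a, and y_k = x_k otherwise.
   All entries of x are >= 1 (lam is dominant), so x_i - l p = x_j + a > 0 and
   the p-core property provides a coordinate k with x_k = x_j + a; this k is
   neither i nor j (as a, l p > 0), hence y_k = x_k = y_j: two distinct
   coordinates of y coincide.  Finally the alternating sum A(y) defining the
   Weyl character vanishes whenever two coordinates of y are equal, because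
   composing with the transposition of those coordinates is a sign-reversing
   involution on the signed permutations that fixes the image of y. *)

(* A(v) = 0 as soon as two distinct coordinates of v are equal: right
   multiplication by the transposition (j k) preserves signed_perm s e v and
   flips the sign det(w), so the sum equals its own opposite. *)
Lemma weyl_numerator_eq_coords m (v : weight m) (j k : 'I_m) :
  j != k -> v j = v k -> forall y, weyl_numerator v y = 0.
Proof.
move=> njk vjk y; rewrite /weyl_numerator.
pose F (s : 'S_m) : int := \sum_(e : {ffun 'I_m -> bool})
  (if y == signed_perm s e v
   then (-1) ^+ (odd_perm s + #|[set k | e k]|)%N else 0).
rewrite -/(\sum_s F s).
have F_tperm s : F (s * tperm j k)%g = - F s.
  rewrite /F -sumrN; apply: eq_bigr => e _.
  have -> : signed_perm (s * tperm j k)%g e v = signed_perm s e v.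
    apply/ffunP => r; rewrite !ffunE permM; congr (_ * _).
    by case: (tpermP j k (s r)) => [->|->|].
  case: ifP => _; last by rewrite oppr0.
  by rewrite odd_permM odd_tperm njk exprD signr_addb expr1 mulrN1 exprD mulNr.
have sum_antisym : \sum_s F s = - \sum_s F s.
  rewrite {1}(reindex_inj (mulIg (tperm j k))) /= -sumrN.
  by apply: eq_bigr => s _; rewrite F_tperm.
by move/eqP: sum_antisym; rewrite -subr_eq0 opprK -mulr2n mulrn_eq0 => /eqP.
Qed.

Lemma inner_eps m (v : weight m) (i : 'I_m) : inner v (eps i) = v i.
Proof.
rewrite /inner (bigD1 i) //= ffunE eqxx mulr1 big1 ?addr0 // => k /negbTE nki.
by rewrite ffunE nki mulr0.
Qed.

Lemma inner_root m (v : weight m) (i j : 'I_m) :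
  inner v (wsub (eps i) (eps j)) = v i - v j.
Proof.
rewrite -!inner_eps /inner -sumrB; apply: eq_bigr => k _.
by rewrite ffunE mulrBr.
Qed.

(* For i <> j the root eps_i - eps_j has squared length 2, so its coroot is
   itself and <v, alpha^vee> = v_i - v_j. *)
Lemma pair_coroot_root m (v : weight m) (i j : 'I_m) : i != j ->
  pair_coroot v (wsub (eps i) (eps j)) = v i - v j.
Proof.
move=> nij; rewrite /pair_coroot !inner_root !ffunE eqxx (negbTE nij).
by rewrite eq_sym (negbTE nij) subr0 sub0r opprK eqxx mulKz.
Qed.

Lemma dot_add_rho m (w : weight m -> weight m) (x : weight m) k :
  wadd (dot w x) (rho m) k = w (wadd x (rho m)) k.
Proof. by rewrite !ffunE subrK. Qed.

Lemma s_aff_coord m p (alpha : weight m) l (x : weight m) k :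
  s_aff p alpha l x k = x k - (pair_coroot x alpha - l * p%:Z) * alpha k.
Proof. by rewrite !ffunE. Qed.

Lemma dominant_shift_pos m (lam : weight m) k :
  dominant lam -> 1 <= wadd lam (rho m) k.
Proof.
case=> _ /(_ k) lam_ge0; rewrite !ffunE; have := ltn_ord k; lia.
Qed.

Theorem lemma2p1 (p m : nat) (hp : prime p) (hp2 : (2 < p)%N) (hm : (1 <= m)%N)
  (lam : weight m) (hcore : p_core p lam)
  (i j : 'I_m) (hij : (i < j)%N) (a l : int) (ha : 0 < a) (hl : 0 < l)
  (hpair : pair_coroot (wadd lam (rho m)) (wsub (eps i) (eps j)) = a + l * p%:Z) :
  weyl_char_zero (dot (s_aff p (wsub (eps i) (eps j)) l) lam).
Proof.
have nij : i != j by rewrite neq_ltn hij.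
set x := wadd lam (rho m) in hcore hpair *.
have x_ij : x i - x j = a + l * p%:Z by rewrite -pair_coroot_root.
have yE k : wadd (dot (s_aff p (wsub (eps i) (eps j)) l) lam) (rho m) k
            = x k - a * ((k == i)%:Z - (k == j)%:Z).
  by rewrite dot_add_rho s_aff_coord hpair addrK !ffunE.
have x_j_pos : 1 <= x j by apply: dominant_shift_pos; case: hcore.
have lp_pos : 0 < l * p%:Z by rewrite mulr_gt0 // ltz_nat prime_gt0.
have [k x_k] : exists k, x k = x i - l * p%:Z.
  by case: hcore => _ /(_ i l) core_i; apply: core_i; rewrite -/x; lia.
have nki : k != i by apply/eqP => ki; move: x_k; rewrite ki; lia.
have nkj : k != j by apply/eqP => kj; move: x_k; rewrite kj; lia.
apply: (@weyl_numerator_eq_coords _ _ j k); first by rewrite eq_sym.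
rewrite !yE eqxx (negbTE nki) (negbTE nkj) eq_sym (negbTE nij) x_k; lia.
Qed.
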